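(* Let $n\ge3$, $c^i=c^i(R^i)$ with $c^i\ne c^j$ for $i\neq j$, and $\mathcal{L}=\sum_{i<j}L_{ij}\,\mathrm{d}R^i\wedge\mathrm{d}R^j$ with $L_{ij}=\mu^j_iu_j-\mu^i_ju_i+\frac{(\mu^j-\mu^i)^2}{c^j-c^i}u_iu_j$. Write $\mathrm{d}\mathcal{L}=\sum_{i<j<k}M_{ijk}\,\mathrm{d}R^i\wedge\mathrm{d}R^j\wedge\mathrm{d}R^k$. Then identically (for all smooth $u,\mu^1,\dots,\mu^n$) $$\begin{aligned}M_{ijk}&=\Big(u_{ij}-2\tfrac{\mu^j-\mu^i}{c^j-c^i}u_iu_j\Big)\Big(\mu^i_k-\tfrac{(\mu^k-\mu^i)^2}{c^k-c^i}u_k-\mu^j_k+\tfrac{(\mu^k-\mu^j)^2}{c^k-c^j}u_k\Big)\\&+\Big(u_{jk}-2\tfrac{\mu^k-\mu^j}{c^k-c^j}u_ju_k\Big)\Big(\mu^j_i-\tfrac{(\mu^i-\mu^j)^2}{c^i-c^j}u_i-\mu^k_i+\tfrac{(\mu^i-\mu^k)^2}{c^i-c^k}u_i\Big)\\&+\Big(u_{ik}-2\tfrac{\mu^i-\mu^k}{c^i-c^k}u_ku_i\Big)\Big(\mu^k_j-\tfrac{(\mu^j-\mu^k)^2}{c^j-c^k}u_j-\mu^i_j+\tfrac{(\mu^j-\mu^i)^2}{c^j-c^i}u_j\Big).\end{aligned}$$ In particular, $\mathrm{d}\mathcal{L}$ vanishes to second order on solutions of $\mu^i_j=\frac{(\mu^j-\mu^i)^2}{c^j-c^i}u_j$,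 $u_{ij}=2\frac{\mu^j-\mu^i}{c^j-c^i}u_iu_j$ ($i\neq j$).
   Context: Lower indices denote partial derivatives with respect to $R^1,\dots,R^n$ (e.g. $\mu^i_k=\partial\mu^i/\partial R^k$). The exterior derivative is $\mathrm{d}\mathcal{L}=\sum_{i<j<k}(D_iL_{jk}+D_jL_{ki}+D_kL_{ij})\mathrm{d}R^i\wedge\mathrm{d}R^j\wedge\mathrm{d}R^k$, $D_i$ the total derivative in $R^i$, $L_{ji}=-L_{ij}$. *)

From HB Require Import structures.
From mathcomp Require Import all_boot all_order all_algebra.
From mathcomp Require Import all_classical all_reals all_analysis.
Set Implicit Arguments. Unset Strict Implicit. Unset Printing Implicit Defensive.
Import Order.TTheory GRing.Theory Num.Theory.
Import numFieldNormedType.Exports.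
Local Open Scope ring_scope.
Local Open Scope classical_set_scope.

Section Defs.
Variables (R : realType) (n : nat).

Definition ecoord (k : 'I_n) : 'rV[R]_n := delta_mx 0 k.

Definition pd (k : 'I_n) (f : 'rV[R]_n -> R) : 'rV[R]_n -> R :=
  fun x => 'D_(ecoord k) f x.

Fixpoint iter_pd (s : seq 'I_n) (f : 'rV[R]_n -> R) : 'rV[R]_n -> R :=
  match s with
  | [::] => f
  | k :: s' => pd k (iter_pd s' f)
  end.

Definition smooth_on (U : set 'rV[R]_n) (f : 'rV[R]_n -> R) : Prop :=
  forall (s : seq 'I_n) (x : 'rV[R]_n), U x -> differentiable (iter_pd s f) x.

(* c^i = c^i(R^i) seen as a function on R^n *)
Definition cfun (c : 'I_n -> R -> R) (i : 'I_n) : 'rV[R]_n -> R :=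
  fun x => c i (x ord0 i).

Definition Lcoef (c : 'I_n -> R -> R) (u : 'rV[R]_n -> R)
    (mu : 'I_n -> 'rV[R]_n -> R) (i j : 'I_n) : 'rV[R]_n -> R :=
  fun x => pd i (mu j) x * pd j u x - pd j (mu i) x * pd i u x
    + (mu j x - mu i x) ^+ 2 / (cfun c j x - cfun c i x) * pd i u x * pd j u x.

(* coefficient of dR^i /\ dR^j /\ dR^k in dL *)
Definition Mcoef (c : 'I_n -> R -> R) (u : 'rV[R]_n -> R)
    (mu : 'I_n -> 'rV[R]_n -> R) (i j k : 'I_n) : 'rV[R]_n -> R :=
  fun x => pd i (Lcoef c u mu j k) x + pd j (Lcoef c u mu k i) x
         + pd k (Lcoef c u mu i j) x.

End Defs.

(** The coefficient [M_ijk] is a sum of three derivatives [D_a L_be] with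
    [a] outside [{b, e}].  Since [c^e] depends on [R^e] only, [c^b] and [c^e]
    are constant along [R^a], so [D_a L_be] is a polynomial in the 2-jets of
    [u] and [mu] divided by [c^e - c^b].  In the cyclic sum the third
    derivatives of [mu] cancel in pairs by the symmetry of second derivatives
    (Schwarz's theorem, via the mean value theorem applied to a second
    difference), and what remains is a rational identity in the jets. *)
From HB Require Import structures.
From mathcomp Require Import all_boot all_order all_algebra.
From mathcomp Require Import all_classical all_reals all_analysis.
From mathcomp Require Import ring lra.
Set Implicit Arguments. Unset Strict Implicit. Unset Printing Implicit Defensive.
Import Order.TTheory GRing.Theory Num.Theory.
Import numFieldNormedType.Exports.
Local Open Scope ring_scope.
Local Open Scope classical_set_scope.

Lemma MVT_segment0 (R : realType) (F dF : R -> R) (h : R) : 0 <= h ->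
  (forall t, 0 <= t <= h -> is_derive t 1 F (dF t)) ->
  exists2 t, 0 <= t <= h & F h - F 0 = dF t * h.
Proof.
move=> h0 dF_F.
have dF_open t : t \in `]0, h[%R -> is_derive t 1 F (dF t).
  by rewrite in_itv => /= /andP[t0 th]; apply: dF_F; rewrite !ltW.
have F_cont : {within `[0, h], continuous F}.
  apply: derivable_within_continuous => t t0h.
  by move: t0h; rewrite in_itv => /dF_F [].
have [t t0h ->] := MVT_segment h0 dF_open F_cont.
by rewrite subr0; exists t; move: t0h; rewrite in_itv.
Qed.

Lemma ler_dist_halves (R : numFieldType) (a b p q e : R) :
  p = q -> `|a - p| < e / 2 -> `|b - q| < e / 2 -> `|a - b| <= e.
Proof.
move=> <- ap bp; rewrite [e]splitr (le_trans (ler_distD p _ _)) //.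
by rewrite lerD ?ltW // distrC.
Qed.

Section Schwarz.
Variables (R : realType) (V : normedModType R).
Implicit Types (f : V -> R) (p x v w : V).

Lemma is_derive_line f p v t : differentiable f (t *: v + p) ->
  is_derive t 1 (fun s => f (s *: v + p)) ('D_v f (t *: v + p)).
Proof.
move=> df.
have line : (fun h => h^-1 *: (((fun s => f (s *: v + p)) \o shift t) (h *: 1)
                             - f (t *: v + p)))
        = (fun h => h^-1 *: ((f \o shift (t *: v + p)) (h *: v) - f (t *: v + p))).
  apply: funext => h /=; congr (_ *: (f _ - _)).
  by rewrite /shift /= [h *: 1]mulr1 scalerDl addrA.
have dv : derivable f (t *: v + p) v by exact: diff_derivable.
by split; [rewrite /derivable line | rewrite /derive line].
Qed.

Definition second_difference f x v w (h : R) :=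
  f (h *: v + (h *: w + x)) - f (h *: v + x) - f (h *: w + x) + f x.

Lemma second_differenceC f x v w h :
  second_difference f x v w h = second_difference f x w v h.
Proof. by rewrite /second_difference [h *: v + (h *: w + x)]addrCA; ring. Qed.

Lemma second_difference_mvt f x v w (B : set V) h : 0 < h ->
  (forall t s, 0 <= t <= h -> 0 <= s <= h -> B (t *: v + (s *: w + x))) ->
  (forall y, B y -> differentiable f y) ->
  (forall y, B y -> differentiable ('D_v f) y) ->
  exists2 y, B y & second_difference f x v w h = 'D_w ('D_v f) y * (h * h).
Proof.
move=> h0 B_sq df dDf.
have h_in : 0 <= h <= h by rewrite (ltW h0) lexx.
have zero_in : 0 <= (0 : R) <= h by rewrite lexx (ltW h0).
have B_sq' t s : 0 <= t <= h -> 0 <= s <= h -> B (s *: w + (t *: v + x)).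
  by move=> th sh; rewrite addrCA; exact: B_sq.
pose g t := f (t *: v + (h *: w + x)) - f (t *: v + x).
have [xi xih Exi] : exists2 t, 0 <= t <= h &
    g h - g 0 = ('D_v f (t *: v + (h *: w + x)) - 'D_v f (t *: v + x)) * h.
  apply: (@MVT_segment0 _ g) (ltW h0) _ => t th.
  apply: is_deriveB; apply: is_derive_line; apply: df; first exact: B_sq.
  by have := B_sq t 0 th zero_in; rewrite scale0r add0r.
pose k s := 'D_v f (s *: w + (xi *: v + x)).
have [eta etah Eeta] : exists2 s, 0 <= s <= h &
    k h - k 0 = 'D_w ('D_v f) (s *: w + (xi *: v + x)) * h.
  apply: (@MVT_segment0 _ k) (ltW h0) _ => s sh.
  by apply: is_derive_line; apply: dDf; exact: B_sq'.
exists (eta *: w + (xi *: v + x)); first exact: B_sq'.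
have -> : second_difference f x v w h = g h - g 0.
  by rewrite /second_difference /g !scale0r !add0r; ring.
rewrite Exi.
have -> : 'D_v f (xi *: v + (h *: w + x)) = k h by rewrite /k addrCA.
have -> : 'D_v f (xi *: v + x) = k 0 by rewrite /k scale0r add0r.
by rewrite Eeta mulrA.
Qed.

Lemma small_square v w (d : R) : 0 < d -> exists2 h : R, 0 < h &
  forall t s, 0 <= t <= h -> 0 <= s <= h -> `|t *: v + s *: w| < d.
Proof.
move=> d0; have := normr_ge0 v; have := normr_ge0 w => w0 v0.
have a0 : 0 < `|v| + `|w| + 1 by lra.
exists (d / (`|v| + `|w| + 1)); first by rewrite divr_gt0.
move=> t s /andP[t0 th] /andP[s0 sh].
rewrite (le_lt_trans (ler_normD _ _)) // !normrZ !ger0_norm //.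
have : d / (`|v| + `|w| + 1) * (`|v| + `|w| + 1) = d by rewrite divfK // gt_eqF.
have : t * `|v| <= d / (`|v| + `|w| + 1) * `|v| by rewrite ler_wpM2r.
have : s * `|w| <= d / (`|v| + `|w| + 1) * `|w| by rewrite ler_wpM2r.
nra.
Qed.

Lemma derive_comm f (U : set V) x v w : open U -> U x ->
  (forall y, U y -> differentiable f y) ->
  (forall y, U y -> differentiable ('D_v f) y) ->
  (forall y, U y -> differentiable ('D_w f) y) ->
  {for x, continuous ('D_w ('D_v f))} -> {for x, continuous ('D_v ('D_w f))} ->
  'D_w ('D_v f) x = 'D_v ('D_w f) x.
Proof.
move=> oU Ux df dDvf dDwf cvw cwv.
apply/eqP; rewrite -subr_eq0 -normr_le0; apply/ler_addgt0Pr => e e0.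
have e2 : 0 < e / 2 by rewrite divr_gt0.
have : \forall y \near x, [/\ U y,
    `|'D_w ('D_v f) x - 'D_w ('D_v f) y| < e / 2 &
    `|'D_v ('D_w f) x - 'D_v ('D_w f) y| < e / 2].
  have nU : \forall y \near x, U y by exact: open_nbhs_nbhs.
  have c1 : \forall y \near x, `|'D_w ('D_v f) x - 'D_w ('D_v f) y| < e / 2.
    exact: (cvgr_dist_lt _ _ cvw _ e2).
  have c2 : \forall y \near x, `|'D_v ('D_w f) x - 'D_v ('D_w f) y| < e / 2.
    exact: (cvgr_dist_lt _ _ cwv _ e2).
  by move: nU c1 c2; apply: filterS3 => y Uy c1y c2y; split.
move=> /nbhs_normP[d /= d0 near_d].
pose B y := `|x - y| < d.
have B_U y : B y -> U y by case/near_d.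
have [h h0 small] := @small_square v w d d0.
have sq_vw t s : 0 <= t <= h -> 0 <= s <= h -> B (t *: v + (s *: w + x)).
  by move=> th sh; rewrite /B distrC addrA addrK; exact: small.
have sq_wv t s : 0 <= t <= h -> 0 <= s <= h -> B (t *: w + (s *: v + x)).
  by move=> th sh; rewrite /B distrC addrA addrK addrC; exact: small.
have [y1 /near_d[_ close1 _] E1] := @second_difference_mvt f x v w B h h0 sq_vw
  (fun y By => df y (B_U y By)) (fun y By => dDvf y (B_U y By)).
have [y2 /near_d[_ _ close2] E2] := @second_difference_mvt f x w v B h h0 sq_wv
  (fun y By => df y (B_U y By)) (fun y By => dDwf y (B_U y By)).
have E : 'D_w ('D_v f) y1 = 'D_v ('D_w f) y2.
  have hh0 : h * h != 0 by rewrite mulf_neq0 // gt_eqF.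
  by have := second_differenceC f x v w h; rewrite E1 E2 => /(mulIf hh0).
by rewrite add0r (ler_dist_halves E close1 close2).
Qed.

End Schwarz.

(* Pointwise forms of the derivation rules, so that derivatives come out as
   expressions in values at [x] rather than in the ring of functions. *)
Section PointwiseDerive.
Variables (R : numFieldType) (V : normedModType R).
Implicit Types (f g : V -> R) (x v : V) (df dg : R).

Lemma is_derive_add f g x v df dg : is_derive x v f df -> is_derive x v g dg ->
  is_derive x v (fun y => f y + g y) (df + dg).
Proof. exact: is_deriveD. Qed.

Lemma is_derive_sub f g x v df dg : is_derive x v f df -> is_derive x v g dg ->
  is_derive x v (fun y => f y - g y) (df - dg).
Proof. exact: is_deriveB. Qed.

Lemma is_derive_mul f g x v df dg : is_derive x v f df -> is_derive x v g dg ->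
  is_derive x v (fun y => f y * g y) (f x * dg + g x * df).
Proof. exact: is_deriveM. Qed.

Lemma is_derive_inv f x v df : is_derive x v f df -> f x != 0 ->
  is_derive x v (fun y => (f y)^-1) (- (f x) ^- 2 * df).
Proof.
move=> [dfx Df] fx0; split; first exact: derivableV.
by rewrite deriveV // Df.
Qed.

End PointwiseDerive.

Section Smooth.
Variables (R : realType) (n : nat) (U : set 'rV[R]_n).

Lemma is_derive_iter_pd (g : 'rV[R]_n -> R) s a x : smooth_on U g -> U x ->
  is_derive x (ecoord R a) (iter_pd s g) (pd a (iter_pd s g) x).
Proof. by move=> sg Ux; apply/derivableP/diff_derivable; exact: sg. Qed.

Lemma smooth_pd_comm (g : 'rV[R]_n -> R) a b x : open U -> smooth_on U g -> U x ->
  pd a (pd b g) x = pd b (pd a g) x.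
Proof.
move=> oU sg Ux; apply: (derive_comm oU Ux).
- exact: (sg [::]).
- exact: (sg [:: b]).
- exact: (sg [:: a]).
- exact/differentiable_continuous/(sg [:: a; b]).
- exact/differentiable_continuous/(sg [:: b; a]).
Qed.

End Smooth.

Lemma is_derive_cfun (R : realType) n (c : 'I_n -> R -> R) (i j : 'I_n) x :
  i != j -> is_derive x (ecoord R i) (cfun c j) 0.
Proof.
move=> ij.
have line : (fun h => h^-1 *: ((cfun c j \o shift x) (h *: ecoord R i) - cfun c j x))
  = (fun h => h^-1 *: ((cst (cfun c j x) \o shift x) (h *: ecoord R i)
                       - cst (cfun c j x) x)).
  apply: funext => h /=; congr (_ *: (_ - _)).
  by rewrite /cfun /shift /ecoord /= !mxE /= eq_sym (negbTE ij) mulr0 add0r.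
split; first by rewrite /derivable line; exact: derivable_cst.
by rewrite /derive line; exact: derive_cst.
Qed.

Section Jets.
Variables (F : fieldType) (I : Type).
Variables (m C du : I -> F) (dm ddu : I -> I -> F) (ddm : I -> I -> I -> F).

(* [D_a L_be] written in the 2-jets at a point: [m i = mu^i], [C i = c^i],
   [du i = u_i], [dm a b = mu^b_a], [ddu a b = u_ab], [ddm a b e = mu^e_ab];
   it is the derivative only for [a] not in [{b, e}]. *)
Definition dLcoef a b e :=
  ddm a b e * du e + dm b e * ddu a e - (ddm a e b * du b + dm e b * ddu a b)
  + 2 * (m e - m b) * (dm a e - dm a b) / (C e - C b) * du b * du e
  + (m e - m b) ^+ 2 / (C e - C b) * (ddu a b * du e + du b * ddu a e).

Lemma dLcoef_cyclic_sum i j k :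
  (forall a b, ddu a b = ddu b a) -> (forall a b e, ddm a b e = ddm b a e) ->
  C i != C j -> C j != C k -> C i != C k ->
  dLcoef i j k + dLcoef j k i + dLcoef k i j =
    (ddu i j - 2 * (m j - m i) / (C j - C i) * du i * du j)
    * (dm k i - (m k - m i) ^+ 2 / (C k - C i) * du k
       - dm k j + (m k - m j) ^+ 2 / (C k - C j) * du k)
  + (ddu j k - 2 * (m k - m j) / (C k - C j) * du j * du k)
    * (dm i j - (m i - m j) ^+ 2 / (C i - C j) * du i
       - dm i k + (m i - m k) ^+ 2 / (C i - C k) * du i)
  + (ddu i k - 2 * (m i - m k) / (C i - C k) * du k * du i)
    * (dm j k - (m j - m k) ^+ 2 / (C j - C k) * du j
       - dm j i + (m j - m i) ^+ 2 / (C j - C i) * du j).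
Proof.
move=> ddu_sym ddm_sym cij cjk cik.
rewrite /dLcoef (ddu_sym j i) (ddu_sym k j) (ddu_sym k i).
rewrite (ddm_sym j i k) (ddm_sym k i j) (ddm_sym k j i).
have [nij nji] : C i - C j != 0 /\ C j - C i != 0 by rewrite !subr_eq0 cij eq_sym cij.
have [njk nkj] : C j - C k != 0 /\ C k - C j != 0 by rewrite !subr_eq0 cjk eq_sym cjk.
have [nik nki] : C i - C k != 0 /\ C k - C i != 0 by rewrite !subr_eq0 cik eq_sym cik.
by field; rewrite nij nji njk nkj nik nki.
Qed.
End Jets.

Section LcoefDerivative.
Variables (R : realType) (n : nat) (U : set 'rV[R]_n).
Variables (c : 'I_n -> R -> R) (u : 'rV[R]_n -> R) (mu : 'I_n -> 'rV[R]_n -> R).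
Hypotheses (smooth_u : smooth_on U u) (smooth_mu : forall i, smooth_on U (mu i)).

Local Notation dL x := (dLcoef (fun i => mu i x) (fun i => cfun c i x)
  (fun i => pd i u x) (fun i j => pd i (mu j) x) (fun i j => pd i (pd j u) x)
  (fun i j k => pd i (pd j (mu k)) x)).

Lemma pd_Lcoef a b e x : U x -> a != b -> a != e -> cfun c b x != cfun c e x ->
  pd a (Lcoef c u mu b e) x = dL x a b e.
Proof.
move=> Ux ab ae cbe.
have Du b' : is_derive x (ecoord R a) (pd b' u) (pd a (pd b' u) x).
  exact: (is_derive_iter_pd [:: b'] a smooth_u Ux).
have Dmu i : is_derive x (ecoord R a) (mu i) (pd a (mu i) x).
  exact: (is_derive_iter_pd [::] a (smooth_mu i) Ux).
have Ddmu i b' : is_derive x (ecoord R a) (pd b' (mu i)) (pd a (pd b' (mu i)) x).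
  exact: (is_derive_iter_pd [:: b'] a (smooth_mu i) Ux).
have cbe' : cfun c e x - cfun c b x != 0 by rewrite subr_eq0 eq_sym.
have Dinv := is_derive_inv
  (is_derive_sub (is_derive_cfun c x ae) (is_derive_cfun c x ab)) cbe'.
have Ddiff := is_derive_sub (Dmu e) (Dmu b).
have DL := is_derive_add
  (is_derive_sub (is_derive_mul (Ddmu e b) (Du e)) (is_derive_mul (Ddmu b e) (Du b)))
  (is_derive_mul (is_derive_mul (is_derive_mul (is_derive_mul Ddiff Ddiff) Dinv)
    (Du b)) (Du e)).
rewrite [LHS]/pd; have [_ ->] := DL.
(* Made opaque, since [field] would otherwise try to unfold the derivatives. *)
rewrite /dLcoef; move: (@pd R n) (cfun c) cbe' => P C cbe'.
by field.
Qed.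

End LcoefDerivative.

Theorem mainTheorem11 (R : realType) (n : nat) (U : set 'rV[R]_n)
  (c : 'I_n -> R -> R) (u : 'rV[R]_n -> R) (mu : 'I_n -> 'rV[R]_n -> R) :
  (3 <= n)%N ->
  open U ->
  (forall i, smooth_on U (cfun c i)) ->
  (forall i j (x : 'rV[R]_n), U x -> i != j -> cfun c i x != cfun c j x) ->
  smooth_on U u ->
  (forall i, smooth_on U (mu i)) ->
  forall (i j k : 'I_n), (i < j)%N -> (j < k)%N ->
  forall x, U x ->
  let cc := cfun c in
  let ui := pd i u x in let uj := pd j u x in let uk := pd k u x in
  Mcoef c u mu i j k x =
    (pd i (pd j u) x - 2 * (mu j x - mu i x) / (cc j x - cc i x) * ui * uj)
    * (pd k (mu i) x - (mu k x - mu i x) ^+ 2 / (cc k x - cc i x) * uk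
       - pd k (mu j) x + (mu k x - mu j x) ^+ 2 / (cc k x - cc j x) * uk)
  + (pd j (pd k u) x - 2 * (mu k x - mu j x) / (cc k x - cc j x) * uj * uk)
    * (pd i (mu j) x - (mu i x - mu j x) ^+ 2 / (cc i x - cc j x) * ui
       - pd i (mu k) x + (mu i x - mu k x) ^+ 2 / (cc i x - cc k x) * ui)
  + (pd i (pd k u) x - 2 * (mu i x - mu k x) / (cc i x - cc k x) * uk * ui)
    * (pd j (mu k) x - (mu j x - mu k x) ^+ 2 / (cc j x - cc k x) * uj
       - pd j (mu i) x + (mu j x - mu i x) ^+ 2 / (cc j x - cc i x) * uj).
Proof.
move=> _ oU _ c_inj su smu i j k ij jk x Ux cc ui uj uk.
have ik : (i < k)%N := ltn_trans ij jk.
have [nij njk nik] : [/\ i != j, j != k & i != k] by rewrite !neq_ltn ij jk ik.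
have [nji nkj nki] : [/\ j != i, k != j & k != i].
  by rewrite !neq_ltn ij jk ik !orbT.
have c_neq a b : a != b -> cfun c a x != cfun c b x by exact: c_inj.
rewrite /Mcoef (pd_Lcoef su smu Ux nij nik (c_neq _ _ njk)).
rewrite (pd_Lcoef su smu Ux njk nji (c_neq _ _ nki)).
rewrite (pd_Lcoef su smu Ux nki nkj (c_neq _ _ nij)).
apply: dLcoef_cyclic_sum; try exact: c_neq.
- by move=> a b; exact: smooth_pd_comm oU su Ux.
- by move=> a b e; exact: smooth_pd_comm oU (smu e) Ux.
Qed.
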